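(* Let $N_1,N_2,N_3\ge0$ be integers. The Calderon transformation $C$ maps the extremal points and extremal faces of $\sigma(N_1,N_2,N_3)$ and of $Q(N_1,N_2,N_3)$ onto the extremal points and extremal faces of $\sigma_P(2N_1,2N_2,2N_3)$ and of $Q_P(2N_1,2N_2,2N_3)$, respectively.
   Context: For integers $N_1,N_2,N_3\ge0$, $\sigma(N_1,N_2,N_3)$ is the set of trigonometric polynomials $f(\alpha,\beta,\gamma)=\sum_{|k|\le N_1}\sum_{|\ell|\le N_2}\sum_{|m|\le N_3} q(k,\ell,m)e^{i(k\alpha+\ell\beta+m\gamma)}$ with $f\ge0$ for all real $\alpha,\beta,\gamma$; $Q(N_1,N_2,N_3)$ is the set of $f\in\sigma(N_1,N_2,N_3)$ of the form $\sum_{j=1}^r|F_j|^2$ with $F_j=\sum_{0\le k\le N_1,0\le\ell\le N_2,0\le m\le N_3}q_j(k,\ell,m)e^{i(k\alpha+\ell\beta+m\gamma)}$. $\sigma_P(2N_1,2N_2,2N_3)$ is the set of real polynomials $f(x,y,z)=\sum_{0\le k\le 2N_1}\sum_{0\le\ell\le2N_2}\sum_{0\le m\le 2N_3}a_{k,\ell,m}x^ky^\ell z^m$ that are nonnegative on $\mathbb R^3$; $Q_P(2N_1,2N_2,2N_3)$ is the set of those $f\in\sigma_P(2N_1,2N_2,2N_3)$ that can be written $\sum_{j=1}^r|F_j(x,y,z)|^2$ with polynomials $F_j$. The Calderon transformation is the linear map $(Cf)(x,y,z)=(x^2+1)^{N_1}(y^2+1)^{N_2}(z^2+1)^{N_3}f(\alpha,\beta,\gamma)$,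 where $e^{i\alpha}=\frac{x+i}{x-i}$, $e^{i\beta}=\frac{y+i}{y-i}$, $e^{i\gamma}=\frac{z+i}{z-i}$. An element $f$ of a convex cone $U$ is extremal (an extremal point) if whenever $f=g+h$ with $g,h\in U$, both $g,h$ are nonnegative multiples of $f$. A convex subset $D\subseteq U$ is an extremal face of $U$ if whenever a point of $D$ lies in the relative interior of a segment contained in $U$, the whole segment lies in $D$. *)

From HB Require Import structures.
From mathcomp Require Import all_boot all_order all_algebra.
From mathcomp Require Import all_classical all_reals all_analysis.
From mathcomp Require Import complex.

Set Implicit Arguments.
Unset Strict Implicit.
Unset Printing Implicit Defensive.

Import Order.TTheory GRing.Theory Num.Theory.
Local Open Scope ring_scope.
Local Open Scope classical_set_scope.

Section Defs.
Variable R : realType.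

Definition fun3 := R -> R -> R -> R.

Definition expi (t : R) : R[i] := (cos t +i* sin t)%C.

Definition trig_poly (N1 N2 N3 : nat) (f : fun3) : Prop :=
  exists q : int -> int -> int -> R[i],
    forall a b c : R,
      real_complex R (f a b c) =
      \sum_(k < (2 * N1).+1) \sum_(l < (2 * N2).+1) \sum_(m < (2 * N3).+1)
        q (k%:Z - N1%:Z) (l%:Z - N2%:Z) (m%:Z - N3%:Z) *
        expi ((k%:Z - N1%:Z)%:~R * a + (l%:Z - N2%:Z)%:~R * b
              + (m%:Z - N3%:Z)%:~R * c).

Definition atrig_poly (N1 N2 N3 : nat) (F : R -> R -> R -> R[i]) : Prop :=
  exists q : nat -> nat -> nat -> R[i],
    forall a b c : R,
      F a b c =
      \sum_(k < N1.+1) \sum_(l < N2.+1) \sum_(m < N3.+1)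
        q k l m * expi (k%:R * a + l%:R * b + m%:R * c).

Definition nonneg3 (f : fun3) : Prop := forall x y z : R, 0 <= f x y z.

Definition sigmaT (N1 N2 N3 : nat) : set fun3 :=
  [set f | trig_poly N1 N2 N3 f /\ nonneg3 f].

Definition QT (N1 N2 N3 : nat) : set fun3 :=
  [set f | sigmaT N1 N2 N3 f /\
     exists (r : nat) (F : 'I_r -> R -> R -> R -> R[i]),
       (forall j, atrig_poly N1 N2 N3 (F j)) /\
       forall a b c : R, real_complex R (f a b c) = \sum_(j < r) `|F j a b c| ^+ 2].

Definition poly3 (D1 D2 D3 : nat) (f : fun3) : Prop :=
  exists a : nat -> nat -> nat -> R,
    forall x y z : R,
      f x y z = \sum_(k < D1.+1) \sum_(l < D2.+1) \sum_(m < D3.+1)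
                  a k l m * x ^+ k * y ^+ l * z ^+ m.

Definition is_poly3 (f : fun3) : Prop := exists D1 D2 D3, poly3 D1 D2 D3 f.

Definition sigmaP (D1 D2 D3 : nat) : set fun3 :=
  [set f | poly3 D1 D2 D3 f /\ nonneg3 f].

Definition QP (D1 D2 D3 : nat) : set fun3 :=
  [set f | sigmaP D1 D2 D3 f /\
     exists (r : nat) (F : 'I_r -> fun3),
       (forall j, is_poly3 (F j)) /\
       forall x y z : R, f x y z = \sum_(j < r) (F j x y z) ^+ 2].

(* The angle alpha(x) = pi - 2 atan x satisfies
   e^{i alpha} = (x+i)/(x-i); since trigonometric polynomials are
   2pi-periodic this is the (unique up to 2pi) choice of angle. *)
Definition calpha (x : R) : R := pi - 2 * atan x.

Definition calderon (N1 N2 N3 : nat) (f : fun3) : fun3 :=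
  fun x y z => (x ^+ 2 + 1) ^+ N1 * (y ^+ 2 + 1) ^+ N2 * (z ^+ 2 + 1) ^+ N3
               * f (calpha x) (calpha y) (calpha z).

Definition addf (f g : fun3) : fun3 := fun x y z => f x y z + g x y z.
Definition scalef (c : R) (f : fun3) : fun3 := fun x y z => c * f x y z.
Definition segpt (g h : fun3) (t : R) : fun3 :=
  addf (scalef (1 - t) g) (scalef t h).

Definition extremal (U : set fun3) (f : fun3) : Prop :=
  U f /\
  forall g h, U g -> U h -> f = addf g h ->
    (exists c, 0 <= c /\ g = scalef c f) /\ (exists c, 0 <= c /\ h = scalef c f).

Definition convex_set (D : set fun3) : Prop :=
  forall g h t, D g -> D h -> 0 <= t <= 1 -> D (segpt g h t).

Definition extremal_face (U D : set fun3) : Prop :=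
  D `<=` U /\ convex_set D /\
  forall g h t,
    (forall s, 0 <= s <= 1 -> U (segpt g h s)) ->
    0 < t < 1 -> D (segpt g h t) ->
    forall s, 0 <= s <= 1 -> D (segpt g h s).

Definition maps_extremal_onto (T : fun3 -> fun3) (U V : set fun3) : Prop :=
  T @` [set f | extremal U f] = [set g | extremal V g] /\
  (forall D, extremal_face U D -> extremal_face V (T @` D)) /\
  (forall E, extremal_face V E -> exists D, extremal_face U D /\ E = T @` D).

End Defs.

(* The substitution alpha = pi - 2 atan x, i.e. x = cot (alpha / 2), sends cos^i (alpha/2)
   sin^(2N-i) (alpha/2) to x^i / (x^2 + 1)^N, and (x^2 + 1)^N e^{i (k - N) alpha} = (x + i)^k
   (x - i)^(2N - k). Hence the Calderon transformation is a linear bijection from trigonometric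
   polynomials of degree (N1, N2, N3) onto real polynomials of degree (2N1, 2N2, 2N3). It
   preserves nonnegativity both ways: the weight is positive, and alpha ranges over (0, 2 pi),
   which suffices for a continuous 2 pi-periodic function. It matches Q with Q_P: for an
   analytic trigonometric polynomial F of degree N, (x^2 + 1)^(N/2) e^{-i N alpha/2} F is a
   complex polynomial G of degree N and |G|^2 = (Re G)^2 + (Im G)^2; conversely, the squares of
   any representation of a polynomial of degree 2N have degree at most N. Finally, a linear map
   that is injective on a space containing a cone U and maps U onto V carries the extremal
   points and faces of U onto those of V. *)

From Pilot Require Import Defs.
From HB Require Import structures.
From mathcomp Require Import all_boot all_order all_algebra.
From mathcomp Require Import all_classical all_reals all_analysis.
From mathcomp Require Import complex polyrcf ring lra zify.

Set Implicit Arguments.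
Unset Strict Implicit.
Unset Printing Implicit Defensive.

Import Order.TTheory GRing.Theory Num.Theory.
Import numFieldNormedType.Exports.

Section Calderon.
Local Open Scope ring_scope.
Local Open Scope classical_set_scope.
Local Open Scope complex_scope.

Variable R : realType.
Local Notation C := R[i].
Local Notation fun3 := (fun3 R).
Local Notation cfun3 := (R -> R -> R -> C).
Local Notation sigmaT := (@sigmaT R).
Local Notation sigmaP := (@sigmaP R).
Local Notation QT := (@QT R).
Local Notation QP := (@QP R).

(** * Extremal points and faces under linear maps *)

Lemma funext3 (T : Type) (f g : R -> R -> R -> T) :
  (forall x y z, f x y z = g x y z) -> f = g.
Proof. by move=> e; apply/funext=> x; apply/funext=> y; apply/funext=> z. Qed.

Lemma segpt0 (g h : fun3) : segpt g h 0 = g.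
Proof. by apply: funext3 => x y z; rewrite /segpt /Defs.addf /scalef; ring. Qed.

Lemma segpt1 (g h : fun3) : segpt g h 1 = h.
Proof. by apply: funext3 => x y z; rewrite /segpt /Defs.addf /scalef; ring. Qed.

Section LinearImage.
Variables (T : fun3 -> fun3) (W U V : set fun3).
Hypothesis T_add : forall f g, T (Defs.addf f g) = Defs.addf (T f) (T g).
Hypothesis T_scale : forall c f, T (scalef c f) = scalef c (T f).
Hypothesis W_add : forall f g, W f -> W g -> W (Defs.addf f g).
Hypothesis W_scale : forall c f, W f -> W (scalef c f).
Hypothesis T_inj : forall f g, W f -> W g -> T f = T g -> f = g.
Hypothesis sub_UW : U `<=` W.
Hypothesis TU : T @` U = V.

Lemma T_segpt g h t : T (segpt g h t) = segpt (T g) (T h) t.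
Proof. by rewrite /segpt T_add !T_scale. Qed.

Lemma W_segpt g h t : W g -> W h -> W (segpt g h t).
Proof. by move=> Wg Wh; apply: W_add; apply: W_scale. Qed.

Lemma image_in g : U g -> V (T g).
Proof. by move=> Ug; rewrite -TU; exists g. Qed.

Lemma image_preim G : V G -> exists2 g, U g & T g = G.
Proof. by rewrite -TU => -[g Ug <-]; exists g. Qed.

Lemma image_extremal : T @` [set f | extremal U f] = [set G | extremal V G].
Proof.
apply/seteqP; split=> [_ [f [Uf f_ext] <-] | F [VF F_ext]].
  split; first exact: image_in.
  move=> _ _ /image_preim[g Ug <-] /image_preim[h Uh <-] eTf.
  have /f_ext[] // : f = Defs.addf g h.
    by apply: T_inj; rewrite ?T_add //; [exact: sub_UW | apply: W_add; exact: sub_UW].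
  by move=> [c [c0 ->]] [d [d0 ->]]; split; [exists c | exists d]; rewrite T_scale.
have [f Uf eF] := image_preim VF; subst F; exists f => //; split=> // g h Ug Uh ef.
have eTf : T f = Defs.addf (T g) (T h) by rewrite ef T_add.
have [[c [c0 ec]] [d [d0 ed]]] := F_ext _ _ (image_in Ug) (image_in Uh) eTf.
have Wf := sub_UW Uf.
split; [exists c | exists d]; split=> //;
  by apply: T_inj; rewrite ?T_scale; [exact: sub_UW | exact: W_scale |].
Qed.

Lemma image_extremal_face D : extremal_face U D -> extremal_face V (T @` D).
Proof.
move=> [DU [Dconv Dface]]; split; [|split].
- by move=> _ [d Dd <-]; apply/image_in/DU.
- move=> _ _ t [g Dg <-] [h Dh <-] t01.
  by exists (segpt g h t); [exact: Dconv | rewrite T_segpt].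
move=> G H t segV t01 [d Dd ed].
have [g Ug eg] : exists2 g, U g & T g = G.
  by apply: image_preim; rewrite -(segpt0 G H); apply: segV; rewrite lexx ler01.
have [h Uh eh] : exists2 h, U h & T h = H.
  by apply: image_preim; rewrite -(segpt1 G H); apply: segV; rewrite lexx ler01.
have seg_U s : 0 <= s <= 1 -> U (segpt g h s).
  move=> s01; have [u Uu eu] := image_preim (segV s s01).
  suff -> : segpt g h s = u by [].
  by apply: T_inj; rewrite ?T_segpt ?eg ?eh //; [apply: W_segpt | ]; exact: sub_UW.
have Dt : D (segpt g h t).
  suff -> : segpt g h t = d by [].
  apply: T_inj; rewrite ?T_segpt ?eg ?eh //; first by apply: W_segpt; exact: sub_UW.
  exact/sub_UW/DU.
move=> s s01; exists (segpt g h s); first exact: (Dface g h t seg_U t01 Dt).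
by rewrite T_segpt eg eh.
Qed.

Lemma preimage_extremal_face E :
  extremal_face V E -> exists D, extremal_face U D /\ E = T @` D.
Proof.
move=> [EV [Econv Eface]]; exists [set f | U f /\ E (T f)]; split; last first.
  apply/seteqP; split=> [G EG | _ [f [_ Ef] <-] //].
  by have [f Uf eG] := image_preim (EV _ EG); exists f => //; split=> //; rewrite eG.
split; [by move=> f [] | split].
- move=> g h t [Ug Eg] [Uh Eh] t01.
  have Es : E (T (segpt g h t)) by rewrite T_segpt; apply: Econv.
  have [u Uu eu] := image_preim (EV _ Es).
  suff -> : segpt g h t = u by split=> //; rewrite eu.
  by apply: T_inj; rewrite ?eu //; [apply: W_segpt | ]; exact: sub_UW.
move=> g h t seg_U t01 [_ Et] s s01; split; first exact: seg_U.
rewrite T_segpt; apply: (Eface (T g) (T h) t) => //; last by rewrite -T_segpt.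
by move=> r r01; rewrite -T_segpt; apply/image_in/seg_U.
Qed.

Lemma linear_image_maps_extremal_onto : maps_extremal_onto T U V.
Proof.
split; [exact: image_extremal | split; [exact: image_extremal_face |]].
exact: preimage_extremal_face.
Qed.

End LinearImage.

Lemma expiD (a b : R) : expi (a + b) = expi a * expi b.
Proof.
by rewrite /expi cosD sinD; apply/eqP; rewrite eq_complex /=; apply/andP; split; apply/eqP; ring.
Qed.

Lemma expi0 : expi (0 : R) = 1.
Proof. by rewrite /expi cos0 sin0. Qed.

Lemma expiNK (a : R) : expi (- a) * expi a = 1.
Proof. by rewrite -expiD addNr expi0. Qed.

Lemma expiN (a : R) : expi (- a) = (expi a)^-1.
Proof. by apply/esym/mulr1_eq; rewrite mulrC expiNK. Qed.

Lemma expi_natrM (n : nat) (a : R) : expi (n%:R * a) = expi a ^+ n.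
Proof.
elim: n => [|n IHn]; first by rewrite mul0r expi0.
by rewrite -addn1 natrD mulrDl mul1r expiD IHn exprD.
Qed.

Lemma norm_expi (a : R) : `|expi a| = 1.
Proof. by rewrite normc_def /= cos2Dsin2 sqrtr1. Qed.

Lemma conj_expi (a : R) : ((expi a)^*)%R = expi (- a).
Proof. by rewrite /expi cosN sinN. Qed.

Lemma Re_mul_expi (q : C) (a : R) :
  complex.Re (q * expi a) = complex.Re q * cos a - complex.Im q * sin a.
Proof. by case: q. Qed.

Lemma normsq_real (r : R) : `|r%:C| ^+ 2 = (r ^+ 2)%:C :> C.
Proof. by rewrite -add_Re2_Im2 /= expr0n /= addr0. Qed.

Definition spanned1 (n : nat) (e : nat -> R -> C) (u : R -> C) :=
  exists c : nat -> C, forall a, u a = \sum_(k < n) c k * e k a.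

Definition spanned3 (n1 n2 n3 : nat) (e : nat -> nat -> nat -> cfun3) (G : cfun3) :=
  exists q : nat -> nat -> nat -> C, forall a b c,
    G a b c = \sum_(k < n1) \sum_(l < n2) \sum_(m < n3) q k l m * e k l m a b c.

Section Spanned3.
Variables (n1 n2 n3 : nat) (e : nat -> nat -> nat -> cfun3).

Lemma spanned3_ext G H : (forall a b c, G a b c = H a b c) ->
  spanned3 n1 n2 n3 e G -> spanned3 n1 n2 n3 e H.
Proof. by move=> eGH [q hq]; exists q => a b c; rewrite -eGH. Qed.

Lemma spanned3_0 : spanned3 n1 n2 n3 e (fun _ _ _ => 0).
Proof.
exists (fun _ _ _ => 0) => a b c.
by rewrite big1 // => k _; rewrite big1 // => l _; rewrite big1 // => m _; rewrite mul0r.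
Qed.

Lemma spanned3D G H : spanned3 n1 n2 n3 e G -> spanned3 n1 n2 n3 e H ->
  spanned3 n1 n2 n3 e (fun a b c => G a b c + H a b c).
Proof.
move=> [q hq] [p hp]; exists (fun k l m => q k l m + p k l m) => a b c.
rewrite hq hp -big_split; apply: eq_bigr => k _; rewrite -big_split.
by apply: eq_bigr => l _; rewrite -big_split; apply: eq_bigr => m _; rewrite mulrDl.
Qed.

Lemma spanned3Z (r : C) G : spanned3 n1 n2 n3 e G ->
  spanned3 n1 n2 n3 e (fun a b c => r * G a b c).
Proof.
move=> [q hq]; exists (fun k l m => r * q k l m) => a b c.
rewrite hq mulr_sumr; apply: eq_bigr => k _; rewrite mulr_sumr.
by apply: eq_bigr => l _; rewrite mulr_sumr; apply: eq_bigr => m _; rewrite mulrA.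
Qed.

Lemma spanned3_sum n (G : 'I_n -> cfun3) : (forall j, spanned3 n1 n2 n3 e (G j)) ->
  spanned3 n1 n2 n3 e (fun a b c => \sum_(j < n) G j a b c).
Proof.
elim: n G => [|n IHn] G hG.
  by apply: spanned3_ext spanned3_0 => a b c; rewrite big_ord0.
apply: spanned3_ext (spanned3D (IHn _ (fun j => hG _)) (hG ord_max)) => a b c.
by rewrite big_ord_recr.
Qed.

End Spanned3.

Lemma spanned1_basis n (e : nat -> R -> C) k : (k < n)%N -> spanned1 n e (e k).
Proof.
move=> kn; exists (fun j => (j == k)%:R) => a.
under eq_bigr => j _ do rewrite mulr_natl mulrb.
by rewrite -big_mkcond (big_ord1_eq _ (fun j => e j a)) kn.
Qed.

Lemma spanned3_basis_ext n1 n2 n3 (e e' : nat -> nat -> nat -> cfun3) G :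
  (forall k l m a b c, e k l m a b c = e' k l m a b c) ->
  spanned3 n1 n2 n3 e G -> spanned3 n1 n2 n3 e' G.
Proof.
by move=> ee' [q hq]; exists q => a b c; rewrite hq; do 3!apply: eq_bigr => ? _; rewrite ee'.
Qed.

Lemma spanned3_prod n1 n2 n3 e1 e2 e3 (u v w : R -> C) :
  spanned1 n1 e1 u -> spanned1 n2 e2 v -> spanned1 n3 e3 w ->
  spanned3 n1 n2 n3 (fun k l m a b c => e1 k a * e2 l b * e3 m c)
    (fun a b c => u a * v b * w c).
Proof.
move=> [c1 h1] [c2 h2] [c3 h3]; exists (fun k l m => c1 k * c2 l * c3 m) => a b c.
rewrite h1 h2 h3 !mulr_suml; apply: eq_bigr => k _.
rewrite -mulrA mulr_suml mulr_sumr; apply: eq_bigr => l _.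
by rewrite mulrA mulr_sumr; apply: eq_bigr => m _; ring.
Qed.

Lemma spanned3_comp n1 n2 n3 e n1' n2' n3' e' (G phi : cfun3) (s : R -> R) :
  spanned3 n1 n2 n3 e G ->
  (forall (k : 'I_n1) (l : 'I_n2) (m : 'I_n3), spanned3 n1' n2' n3' e'
     (fun x y z => phi x y z * e k l m (s x) (s y) (s z))) ->
  spanned3 n1' n2' n3' e' (fun x y z => phi x y z * G (s x) (s y) (s z)).
Proof.
move=> [q hq] he.
have -> : (fun x y z => phi x y z * G (s x) (s y) (s z)) = fun x y z =>
    \sum_(k < n1) \sum_(l < n2) \sum_(m < n3) q k l m * (phi x y z * e k l m (s x) (s y) (s z)).
  apply/funext => x; apply/funext => y; apply/funext => z; rewrite hq mulr_sumr.
  apply: eq_bigr => k _; rewrite mulr_sumr; apply: eq_bigr => l _; rewrite mulr_sumr.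
  by apply: eq_bigr => m _; rewrite mulrCA.
by do 3![apply: spanned3_sum => ?]; apply: spanned3Z.
Qed.

Definition wave (N k : nat) (a : R) : C := expi ((k%:Z - N%:Z)%:~R * a).

Lemma wave_expi N k (a : R) : wave N k a = expi (- (N%:R * a)) * expi (k%:R * a).
Proof. by rewrite -expiD /wave intrD intrN mulrDl addrC mulNr. Qed.

Lemma wave_shift N k j (a : R) : (j <= N)%N ->
  wave N (k + N - j) a = expi (k%:R * a) * expi (- (j%:R * a)).
Proof.
move=> jN; rewrite /wave; have -> : (k + N - j)%:Z - N%:Z = k%:Z - j%:Z by lia.
by rewrite -expiD intrB; congr expi; ring.
Qed.

Lemma wave_expi_eq N k (a a' : R) : expi a' = expi a -> wave N k a' = wave N k a.
Proof. by move=> e; rewrite !wave_expi -!mulrN !expi_natrM !expiN e. Qed.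

Lemma trig_polyE N1 N2 N3 (f : fun3) : trig_poly N1 N2 N3 f <->
  spanned3 (2 * N1).+1 (2 * N2).+1 (2 * N3).+1
    (fun k l m a b c => wave N1 k a * wave N2 l b * wave N3 m c)
    (fun a b c => (f a b c)%:C).
Proof.
split=> [[q hq] | [q hq]].
  exists (fun k l m => q (k%:Z - N1%:Z) (l%:Z - N2%:Z) (m%:Z - N3%:Z)) => a b c.
  by rewrite hq; do 3!apply: eq_bigr => ? _; rewrite !expiD.
have shiftK (k N : nat) : absz (k%:Z - N%:Z + N%:Z) = k by rewrite subrK absz_nat.
exists (fun K L M => q (absz (K + N1%:Z)) (absz (L + N2%:Z)) (absz (M + N3%:Z))).
by move=> a b c; rewrite hq; do 3!apply: eq_bigr => ? _; rewrite !shiftK !expiD.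
Qed.

Lemma trig_polyD N1 N2 N3 (f g : fun3) :
  trig_poly N1 N2 N3 f -> trig_poly N1 N2 N3 g -> trig_poly N1 N2 N3 (Defs.addf f g).
Proof.
by rewrite !trig_polyE => sf sg; apply: spanned3_ext (spanned3D sf sg) => a b c; rewrite rmorphD.
Qed.

Lemma trig_polyZ N1 N2 N3 (r : R) (f : fun3) :
  trig_poly N1 N2 N3 f -> trig_poly N1 N2 N3 (scalef r f).
Proof.
by rewrite !trig_polyE => sf; apply: spanned3_ext (spanned3Z r%:C sf) => a b c; rewrite rmorphM.
Qed.

Lemma atrig_polyE N1 N2 N3 (F : cfun3) : atrig_poly N1 N2 N3 F <->
  spanned3 N1.+1 N2.+1 N3.+1
    (fun k l m a b c => expi (k%:R * a) * expi (l%:R * b) * expi (m%:R * c)) F.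
Proof.
pose e k l m (a b c : R) := expi (k%:R * a + l%:R * b + m%:R * c).
have -> : atrig_poly N1 N2 N3 F = spanned3 N1.+1 N2.+1 N3.+1 e F by [].
by split; apply: spanned3_basis_ext => *; rewrite /e !expiD.
Qed.

Lemma spanned3_normsq_atrig N1 N2 N3 (F : cfun3) : atrig_poly N1 N2 N3 F ->
  spanned3 (2 * N1).+1 (2 * N2).+1 (2 * N3).+1
    (fun k l m a b c => wave N1 k a * wave N2 l b * wave N3 m c)
    (fun a b c => `|F a b c| ^+ 2).
Proof.
move=> [q hq].
have bound j k N : (j < N.+1)%N -> (k < N.+1)%N -> (j + N - k < (2 * N).+1)%N by lia.
(* Restated so that rewriting yields [Num.conj] terms, not applications of the morphism. *)
have conjM (u v : C) : ((u * v)^*)%R = (u^*)%R * (v^*)%R by exact: rmorphM.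
have conj_sum n (u : 'I_n -> C) : ((\sum_(i < n) u i)^*)%R = \sum_(i < n) ((u i)^*)%R.
  exact: rmorph_sum.
have -> : (fun a b c => `|F a b c| ^+ 2) = fun a b c =>
  \sum_(k < N1.+1) \sum_(l < N2.+1) \sum_(m < N3.+1)
  \sum_(k' < N1.+1) \sum_(l' < N2.+1) \sum_(m' < N3.+1) q k l m * (q k' l' m')^* *
    (wave N1 (k + N1 - k') a * wave N2 (l + N2 - l') b * wave N3 (m + N3 - m') c).
  apply: funext3 => a b c; rewrite normCK hq mulr_suml; apply: eq_bigr => k _.
  rewrite mulr_suml; apply: eq_bigr => l _; rewrite mulr_suml; apply: eq_bigr => m _.
  rewrite conj_sum mulr_sumr; apply: eq_bigr => k' _.
  rewrite conj_sum mulr_sumr; apply: eq_bigr => l' _.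
  rewrite conj_sum mulr_sumr; apply: eq_bigr => m' _.
  rewrite conjM conj_expi (wave_shift _ _ (ltnSE (ltn_ord k'))).
  rewrite (wave_shift _ _ (ltnSE (ltn_ord l'))) (wave_shift _ _ (ltnSE (ltn_ord m'))).
  by rewrite !expiD !opprD !expiD; ring.
do 6![apply: spanned3_sum => ?]; apply: spanned3Z.
by apply: spanned3_prod; apply: spanned1_basis; apply: bound.
Qed.

Lemma trig_poly_expi_eq N1 N2 N3 (f : fun3) a b c a' b' c' : trig_poly N1 N2 N3 f ->
  expi a' = expi a -> expi b' = expi b -> expi c' = expi c -> f a' b' c' = f a b c.
Proof.
move=> /trig_polyE[q hq] ea eb ec; apply: (@complexI R); rewrite !hq.
do 3!apply: eq_bigr => ? _.
by rewrite (wave_expi_eq _ _ ea) (wave_expi_eq _ _ eb) (wave_expi_eq _ _ ec).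
Qed.

Lemma expi_mod_2pi (a : R) : exists2 a', 0 <= a' < pi *+ 2 & expi a' = expi a.
Proof.
have c1 : -1 <= cos a <= 1 by rewrite cos_geN1 cos_le1.
have hs : Num.sqrt (1 - cos a ^+ 2) = `|sin a| by rewrite -sin2cos2 sqrtr_sqr.
have pi0 := pi_gt0 R.
have [s0|s0] := leP 0 (sin a).
  exists (acos (cos a)).
    rewrite acos_ge0 //=; apply: (le_lt_trans (acos_lepi c1)).
    by rewrite mulr2n ltrDr.
  by rewrite /expi acosK ?in_itv //= sin_acos // hs ger0_norm.
exists (pi *+ 2 - acos (cos a)).
  rewrite subr_ge0 ltrBlDr ltrDl; apply/andP; split.
    by apply: (le_trans (acos_lepi c1)); rewrite mulr2n lerDr ltW.
  apply: acos_gt0; case/andP: c1 => -> /= c1.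
  rewrite lt_neqAle c1 andbT; apply/negP => /eqP e.
  have := cos2Dsin2 a; rewrite e expr1n => h.
  have : sin a ^+ 2 = 0 by rewrite -(addKr 1 (sin a ^+ 2)) h addNr.
  by move/eqP; rewrite sqrf_eq0 => /eqP s00; move: s0; rewrite s00 ltxx.
rewrite /expi addrC cosD2pi sinD2pi cosN sinN acosK ?in_itv //= sin_acos // hs.
by rewrite ltr0_norm // opprK.
Qed.

Lemma continuous_Re_mul_expi (r : C) (K d : R) :
  continuous (fun t : R => complex.Re (r * expi (K * t + d))).
Proof.
have lin : continuous (fun t : R => K * t + d).
  by move=> t; apply: cvgD; [apply: cvgM; [exact: cvg_cst | exact: cvg_id] | exact: cvg_cst].
have -> : (fun t => complex.Re (r * expi (K * t + d))) =
    fun t => complex.Re r * cos (K * t + d) - complex.Im r * sin (K * t + d).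
  by apply/funext => t; rewrite Re_mul_expi.
move=> t; apply: cvgB; apply: cvgM; try exact: cvg_cst.
  exact: (continuous_comp (lin t) (@continuous_cos R _)).
exact: (continuous_comp (lin t) (@continuous_sin R _)).
Qed.

Lemma trig_poly_diag_continuous N1 N2 N3 (f : fun3) (a b c : R) :
  trig_poly N1 N2 N3 f -> continuous (fun t : R => f (a + t) (b + t) (c + t)).
Proof.
move=> /trig_polyE[q hq].
pose s N k : R := (k%:Z - N%:Z)%:~R.
have -> : (fun t => f (a + t) (b + t) (c + t)) = fun t =>
    \sum_(k < (2 * N1).+1) \sum_(l < (2 * N2).+1) \sum_(m < (2 * N3).+1)
      complex.Re (q k l m * expi ((s N1 k + s N2 l + s N3 m) * t +
                                  (s N1 k * a + s N2 l * b + s N3 m * c))).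
  apply/funext => t; rewrite -[LHS]/(complex.Re (_%:C)) hq raddf_sum.
  apply: eq_bigr => k _; rewrite raddf_sum; apply: eq_bigr => l _; rewrite raddf_sum.
  by apply: eq_bigr => m _; rewrite /wave -!expiD; congr (complex.Re (_ * expi _)); ring.
by do 3!(apply: continuous_big; [exact: add_continuous | move=> ? _]);
  exact: continuous_Re_mul_expi.
Qed.

Lemma trig_poly_nonneg_box N1 N2 N3 (f : fun3) : trig_poly N1 N2 N3 f ->
  (forall a b c, 0 < a < pi *+ 2 -> 0 < b < pi *+ 2 -> 0 < c < pi *+ 2 -> 0 <= f a b c) ->
  nonneg3 f.
Proof.
move=> tf f_ge0 a0 b0 c0.
(* Reduce modulo 2 pi into [0, 2 pi)^3, then approach along the diagonal from inside the box. *)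
have [a /andP[a_ge0 a_lt] ea] := expi_mod_2pi a0.
have [b /andP[b_ge0 b_lt] eb] := expi_mod_2pi b0.
have [c /andP[c_ge0 c_lt] ec] := expi_mod_2pi c0.
rewrite -(trig_poly_expi_eq tf ea eb ec) -[a]addr0 -[b]addr0 -[c]addr0.
have e_gt0 : 0 < Num.min (pi *+ 2 - a) (Num.min (pi *+ 2 - b) (pi *+ 2 - c)).
  by rewrite !lt_min !subr_gt0 a_lt b_lt c_lt.
have := cvg_at_right_filter (@trig_poly_diag_continuous N1 N2 N3 f a b c tf 0).
move/cvgr_to_ge; apply.
near=> t.
have t_gt0 : 0 < t by near: t; exact: nbhs_right_gt.
have : t < Num.min (pi *+ 2 - a) (Num.min (pi *+ 2 - b) (pi *+ 2 - c)).
  by near: t; exact: nbhs_right_lt.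
rewrite !lt_min => /and3P[ta tb tc].
by apply: f_ge0; apply/andP; split; lra.
Unshelve. all: by end_near.
Qed.

Lemma size_XsubC_expM (a b : C) i j :
  size (('X - a%:P) ^+ i * ('X - b%:P) ^+ j) = (i + j).+1.
Proof.
rewrite size_Mmonic ?monic_exp ?monicXsubC // ?size_exp_XsubC ?addnS //.
by rewrite -size_poly_eq0 size_exp_XsubC.
Qed.

Definition half_mono (M i : nat) (a : R) : R := cos (a / 2) ^+ i * sin (a / 2) ^+ (M - i).

Lemma analytic_half_mono M i : (i <= M)%N ->
  spanned1 M.+1 (fun k a => expi (k%:R * a))
    (fun a => expi (M%:R * (a / 2)) * (half_mono M i a)%:C).
Proof.
move=> iM; set P := ('X - (-1)%:P) ^+ i * ('X - 1%:P) ^+ (M - i) : {poly C}.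
have two_neq0 : (2 : C) != 0 by rewrite pnatr_eq0.
exists (fun k => 2^-1 ^+ i * (- 'i / 2) ^+ (M - i) * P`_k) => a.
set E := expi (a / 2); set E' := expi (- (a / 2)).
have EE' : E' * E = 1 by rewrite expiNK.
have hc : (cos (a / 2))%:C = (E + E') / 2.
  apply: (mulIf two_neq0); rewrite divfK //.
  by apply/eqP; rewrite eq_complex /= cosN sinN; apply/andP; split; apply/eqP; ring.
have hs : (sin (a / 2))%:C = (E - E') * (- 'i / 2).
  apply: (mulIf two_neq0); rewrite mulrA divfK //.
  by apply/eqP; rewrite eq_complex /= cosN sinN; apply/andP; split; apply/eqP; ring.
have hEp : E * (E + E') = E ^+ 2 - (-1) by rewrite opprK mulrDr [E * E']mulrC EE' expr2.
have hEm : E * (E - E') = E ^+ 2 - 1 by rewrite mulrBr [E * E']mulrC EE' expr2.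
have -> : \sum_(k < M.+1) 2^-1 ^+ i * (- 'i / 2) ^+ (M - i) * P`_k * expi (k%:R * a) =
    2^-1 ^+ i * (- 'i / 2) ^+ (M - i) * P.[E ^+ 2].
  rewrite (@horner_coef_wide _ M.+1) ?size_XsubC_expM ?subnKC // mulr_sumr.
  apply: eq_bigr => k _; rewrite -exprM -expi_natrM [RHS]mulrA; congr (_ * expi _).
  by rewrite natrM; field.
rewrite /half_mono rmorphM !rmorphXn /= expi_natrM -/E hc hs hornerM !horner_exp !hornerXsubC.
rewrite -[in E ^+ M](subnKC iM) exprD -hEp -hEm !exprMn; ring.
Qed.

Lemma spanned1_wave_half_mono N i : (i <= 2 * N)%N ->
  spanned1 (2 * N).+1 (wave N) (fun a : R => (half_mono (2 * N) i a)%:C).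
Proof.
move=> iN; have [c hc] := analytic_half_mono iN; exists c => a.
under eq_bigr => k _ do rewrite wave_expi mulrCA.
rewrite -mulr_sumr -hc mulrA -expiD natrM.
have -> : - (N%:R * a) + 2%:R * N%:R * (a / 2) = 0 by field.
by rewrite expi0 mul1r.
Qed.

Definition half_poly N1 N2 N3 (A : nat -> nat -> nat -> R) : fun3 := fun a b c =>
  \sum_(k < N1.+1) \sum_(l < N2.+1) \sum_(m < N3.+1)
    A k l m * (half_mono N1 k a * half_mono N2 l b * half_mono N3 m c).

Lemma trig_poly_half_poly N1 N2 N3 A :
  trig_poly N1 N2 N3 (half_poly (2 * N1) (2 * N2) (2 * N3) A).
Proof.
apply/trig_polyE; apply: (@spanned3_ext _ _ _ _ (fun a b c =>
    \sum_(k < (2 * N1).+1) \sum_(l < (2 * N2).+1) \sum_(m < (2 * N3).+1) (A k l m)%:C *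
      ((half_mono (2 * N1) k a)%:C * (half_mono (2 * N2) l b)%:C *
       (half_mono (2 * N3) m c)%:C))).
  move=> a b c; rewrite /half_poly.
  by do 3!(rewrite rmorph_sum; apply: eq_bigr => ? _); rewrite !rmorphM.
do 3![apply: spanned3_sum => ?]; apply: spanned3Z.
by apply: spanned3_prod; apply: spanned1_wave_half_mono; rewrite -ltnS.
Qed.

Lemma atrig_half_poly N1 N2 N3 A : atrig_poly N1 N2 N3 (fun a b c =>
  expi (N1%:R * (a / 2)) * expi (N2%:R * (b / 2)) * expi (N3%:R * (c / 2)) *
    (half_poly N1 N2 N3 A a b c)%:C).
Proof.
apply/atrig_polyE; apply: (@spanned3_ext _ _ _ _ (fun a b c =>
    \sum_(k < N1.+1) \sum_(l < N2.+1) \sum_(m < N3.+1) (A k l m)%:C *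
      (expi (N1%:R * (a / 2)) * (half_mono N1 k a)%:C *
       (expi (N2%:R * (b / 2)) * (half_mono N2 l b)%:C) *
       (expi (N3%:R * (c / 2)) * (half_mono N3 m c)%:C)))).
  move=> a b c; rewrite /half_poly rmorph_sum mulr_sumr; apply: eq_bigr => k _.
  rewrite rmorph_sum mulr_sumr; apply: eq_bigr => l _.
  by rewrite rmorph_sum mulr_sumr; apply: eq_bigr => m _; rewrite !rmorphM; ring.
do 3![apply: spanned3_sum => ?]; apply: spanned3Z.
by apply: spanned3_prod; apply: analytic_half_mono; rewrite -ltnS.
Qed.

(** * The substitution alpha = pi - 2 atan x *)

Definition sqrt1D (x : R) := Num.sqrt (1 + x ^+ 2).

Lemma sqrt1D_gt0 (x : R) : 0 < sqrt1D x.
Proof. by rewrite sqrtr_gt0 ltr_pwDl ?sqr_ge0. Qed.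

Lemma sqrt1D_neq0 (x : R) : sqrt1D x != 0.
Proof. by rewrite gt_eqF ?sqrt1D_gt0. Qed.

Lemma sqrt1D_expM (x : R) N : sqrt1D x ^+ (2 * N) = (x ^+ 2 + 1) ^+ N.
Proof. by rewrite exprM sqr_sqrtr ?addr_ge0 ?sqr_ge0 // addrC. Qed.

Lemma sqrt1D_sqr (x : R) N : (sqrt1D x ^+ N) ^+ 2 = (x ^+ 2 + 1) ^+ N.
Proof. by rewrite -exprM mulnC sqrt1D_expM. Qed.

Lemma sin_atan (x : R) : sin (atan x) = x / sqrt1D x.
Proof.
have c0 : cos (atan x) != 0 by rewrite cos_atan invr_eq0 sqrt1D_neq0.
by rewrite -{2}(atanK x) /tan /sqrt1D -cos_atan divfK.
Qed.

Lemma half_calpha (x : R) : calpha x / 2 = - (atan x - pi / 2).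
Proof. by rewrite /calpha; field. Qed.

Lemma cos_half_calpha (x : R) : cos (calpha x / 2) = x / sqrt1D x.
Proof. by rewrite half_calpha cosN cosBpihalf sin_atan. Qed.

Lemma sin_half_calpha (x : R) : sin (calpha x / 2) = (sqrt1D x)^-1.
Proof. by rewrite half_calpha sinN sinBpihalf opprK cos_atan. Qed.

Lemma calpha_surj (a : R) : 0 < a < pi *+ 2 -> exists x, calpha x = a.
Proof.
move=> /andP[a_gt0 a_lt]; exists (tan ((pi - a) / 2)).
rewrite /calpha tanK; first by field.
by rewrite in_itv /=; apply/andP; split; move: a_lt; rewrite mulr2n => ?; lra.
Qed.

Lemma half_mono_calpha N i (x : R) : (i <= N)%N ->
  sqrt1D x ^+ N * half_mono N i (calpha x) = x ^+ i.
Proof.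
move=> iN; rewrite /half_mono cos_half_calpha sin_half_calpha -{1}(subnKC iN).
by rewrite exprD !exprMn !exprVn; field; rewrite !expf_neq0 ?sqrt1D_neq0.
Qed.

Lemma half_poly_calpha N1 N2 N3 A (x y z : R) :
  sqrt1D x ^+ N1 * sqrt1D y ^+ N2 * sqrt1D z ^+ N3 *
    half_poly N1 N2 N3 A (calpha x) (calpha y) (calpha z) =
  \sum_(k < N1.+1) \sum_(l < N2.+1) \sum_(m < N3.+1) A k l m * x ^+ k * y ^+ l * z ^+ m.
Proof.
rewrite /half_poly mulr_sumr; apply: eq_bigr => k _; rewrite mulr_sumr; apply: eq_bigr => l _.
rewrite mulr_sumr; apply: eq_bigr => m _.
rewrite -(half_mono_calpha x (ltnSE (ltn_ord k))) -(half_mono_calpha y (ltnSE (ltn_ord l))).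
by rewrite -(half_mono_calpha z (ltnSE (ltn_ord m))); ring.
Qed.

Definition cayley_mono (M k : nat) : {poly C} :=
  ('X - (- 'i)%:P) ^+ k * ('X - 'i%:P) ^+ (M - k).

Lemma cayley_mono_calpha (x : R) (M k : nat) : (k <= M)%N ->
  (sqrt1D x ^+ M)%:C * expi ((k%:R - M%:R / 2) * calpha x) = (cayley_mono M k).[x%:C].
Proof.
move=> kM; have s0 : (sqrt1D x)%:C != 0 by rewrite (inj_eq (@complexI _)) sqrt1D_neq0.
have eE : expi (calpha x / 2) = (x%:C + 'i) / (sqrt1D x)%:C.
  apply: (mulIf s0); rewrite divfK // /expi cos_half_calpha sin_half_calpha.
  by apply/eqP; rewrite eq_complex /=; apply/andP; split; apply/eqP; field;
    rewrite sqrt1D_neq0.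
have eE' : expi (- (calpha x / 2)) = (x%:C - 'i) / (sqrt1D x)%:C.
  apply: (mulIf s0); rewrite divfK // /expi cosN sinN cos_half_calpha sin_half_calpha.
  by apply/eqP; rewrite eq_complex /=; apply/andP; split; apply/eqP; field;
    rewrite sqrt1D_neq0.
have -> : (k%:R - M%:R / 2) * calpha x = k%:R * (calpha x / 2) + (M - k)%:R * - (calpha x / 2).
  by rewrite natrB //; field.
rewrite expiD !expi_natrM eE eE' /cayley_mono hornerM !horner_exp !hornerXsubC opprK.
rewrite rmorphXn -{1}(subnKC kM) exprD !exprMn !exprVn; field.
by rewrite !expf_neq0.
Qed.

Lemma wave_calpha N k (x : R) : (k <= 2 * N)%N ->
  ((x ^+ 2 + 1) ^+ N)%:C * wave N k (calpha x) = (cayley_mono (2 * N) k).[x%:C].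
Proof.
move=> kN; rewrite -cayley_mono_calpha // sqrt1D_expM /wave intrD intrN natrM.
by congr (_ * expi (_ * _)); field.
Qed.

Lemma expi_calpha_cayley N k (x : R) : (k <= N)%N ->
  (sqrt1D x ^+ N)%:C * expi (- (N%:R * (calpha x / 2))) * expi (k%:R * calpha x) =
  (cayley_mono N k).[x%:C].
Proof. by move=> kN; rewrite -cayley_mono_calpha // -mulrA -expiD; congr (_ * expi _); field. Qed.

Lemma spanned1_horner D (P : {poly C}) : (size P <= D.+1)%N ->
  spanned1 D.+1 (fun k (x : R) => x%:C ^+ k) (fun x => P.[x%:C]).
Proof. by move=> sP; exists (fun k => P`_k) => x; rewrite (horner_coef_wide _ sP). Qed.

Lemma spanned1_cayley_mono M k : (k <= M)%N ->
  spanned1 M.+1 (fun k (x : R) => x%:C ^+ k) (fun x => (cayley_mono M k).[x%:C]).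
Proof. by move=> kM; apply: spanned1_horner; rewrite size_XsubC_expM subnKC. Qed.

Local Notation monomial3 := (fun (k l m : nat) (x y z : R) => x%:C ^+ k * y%:C ^+ l * z%:C ^+ m).

Lemma poly3_Re D1 D2 D3 (G : cfun3) : spanned3 D1.+1 D2.+1 D3.+1 monomial3 G ->
  poly3 D1 D2 D3 (fun x y z => complex.Re (G x y z)).
Proof.
move=> [q hq]; exists (fun k l m => complex.Re (q k l m)) => x y z.
rewrite hq !raddf_sum; apply: eq_bigr => k _; rewrite raddf_sum; apply: eq_bigr => l _.
rewrite raddf_sum; apply: eq_bigr => m _.
by rewrite -!rmorphXn -!rmorphM; case: (q k l m) => u v /=; ring.
Qed.

Lemma poly3_Im D1 D2 D3 (G : cfun3) : spanned3 D1.+1 D2.+1 D3.+1 monomial3 G ->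
  poly3 D1 D2 D3 (fun x y z => complex.Im (G x y z)).
Proof.
move=> /(spanned3Z (- 'i)) /poly3_Re; congr poly3; apply: funext3 => x y z.
by case: (G x y z) => u v /=; ring.
Qed.

Lemma poly3_calderon N1 N2 N3 (f : fun3) : trig_poly N1 N2 N3 f ->
  poly3 (2 * N1) (2 * N2) (2 * N3) (calderon N1 N2 N3 f).
Proof.
move=> /trig_polyE tf.
pose phi (x y z : R) : C := ((x ^+ 2 + 1) ^+ N1 * (y ^+ 2 + 1) ^+ N2 * (z ^+ 2 + 1) ^+ N3)%:C.
have : spanned3 (2 * N1).+1 (2 * N2).+1 (2 * N3).+1 monomial3
    (fun x y z => phi x y z * (f (calpha x) (calpha y) (calpha z))%:C).
  apply: (spanned3_comp tf) => k l m.
  apply: spanned3_ext (spanned3_prod (spanned1_cayley_mono (ltnSE (ltn_ord k)))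
    (spanned1_cayley_mono (ltnSE (ltn_ord l))) (spanned1_cayley_mono (ltnSE (ltn_ord m)))).
  move=> x y z; rewrite -!wave_calpha ?(ltnSE (ltn_ord _)) // /phi !rmorphM; ring.
by move/poly3_Re; congr poly3; apply: funext3 => x y z; rewrite -rmorphM.
Qed.

(** * Degrees of sums of squares *)

Lemma size_poly_sqr_le N (P Q : {poly R}) : (size Q <= (2 * N).+1)%N ->
  (forall x, P.[x] ^+ 2 <= Q.[x]) -> (size P <= N.+1)%N.
Proof.
(* Otherwise P^2 - Q has a positive leading coefficient, so it is positive far out. *)
move=> sQ PQ; rewrite leqNgt; apply/negP => sP.
have P0 : P != 0 by rewrite -size_poly_eq0 -lt0n (leq_trans _ sP).
have sQ_lt : (size (- Q) < size (P * P)%R)%N.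
  rewrite size_polyN (leq_ltn_trans sQ) // size_mul //.
  by move: sP; case: (size P) => // n; rewrite addSn /=; lia.
have lc : lead_coef (P * P - Q) = lead_coef P ^+ 2 by rewrite lead_coefDl // lead_coefM.
have lc_gt0 : 0 < lead_coef (P * P - Q).
  by rewrite lc lt_def sqr_ge0 sqrf_eq0 lead_coef_eq0 P0.
have [x hx] := poly_pinfty_gt_lc lc_gt0.
have := hx x (lexx x); have := PQ x.
by rewrite hornerD hornerN hornerM -expr2; lra.
Qed.

Lemma poly3_swap12 D1 D2 D3 (F : fun3) : poly3 D1 D2 D3 F ->
  poly3 D2 D1 D3 (fun x y z => F y x z).
Proof.
move=> [a ha]; exists (fun k l m => a l k m) => x y z.
by rewrite ha exchange_big; do 3!apply: eq_bigr => ? _; ring.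
Qed.

Lemma poly3_swap13 D1 D2 D3 (F : fun3) : poly3 D1 D2 D3 F ->
  poly3 D3 D2 D1 (fun x y z => F z y x).
Proof.
move=> [a ha]; exists (fun k l m => a m l k) => x y z.
rewrite ha; under eq_bigr => k _ do rewrite exchange_big.
rewrite exchange_big; apply: eq_bigr => m _; rewrite exchange_big.
by do 2!apply: eq_bigr => ? _; ring.
Qed.

Lemma poly3_sqr_le1 D1 D2 D3 N E2 E3 (F p : fun3) :
  poly3 D1 D2 D3 F -> poly3 (2 * N) E2 E3 p ->
  (forall x y z, F x y z ^+ 2 <= p x y z) -> poly3 N D2 D3 F.
Proof.
move=> [a ha] [b hb] Fp.
exists (fun k l m => if (k < D1.+1)%N then a k l m else 0) => x y z.
pose P := \poly_(k < D1.+1) \sum_(l < D2.+1) \sum_(m < D3.+1) a k l m * y ^+ l * z ^+ m.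
pose Q := \poly_(k < (2 * N).+1) \sum_(l < E2.+1) \sum_(m < E3.+1) b k l m * y ^+ l * z ^+ m.
have hP t : F t y z = P.[t].
  rewrite ha horner_poly; apply: eq_bigr => k _; rewrite mulr_suml; apply: eq_bigr => l _.
  by rewrite mulr_suml; apply: eq_bigr => m _; ring.
have hQ t : p t y z = Q.[t].
  rewrite hb horner_poly; apply: eq_bigr => k _; rewrite mulr_suml; apply: eq_bigr => l _.
  by rewrite mulr_suml; apply: eq_bigr => m _; ring.
have sP : (size P <= N.+1)%N.
  by apply: (size_poly_sqr_le (Q := Q)); [exact: size_poly | move=> t; rewrite -hP -hQ].
rewrite hP (horner_coef_wide _ sP); apply: eq_bigr => k _; rewrite coef_poly.
case: ifP => _; last by rewrite mul0r big1 // => l _; rewrite big1 // => m _; rewrite !mul0r.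
by rewrite mulr_suml; apply: eq_bigr => l _; rewrite mulr_suml; apply: eq_bigr => m _; ring.
Qed.

Lemma poly3_sqr_le D1 D2 D3 N1 N2 N3 (F p : fun3) :
  poly3 D1 D2 D3 F -> poly3 (2 * N1) (2 * N2) (2 * N3) p ->
  (forall x y z, F x y z ^+ 2 <= p x y z) -> poly3 N1 N2 N3 F.
Proof.
move=> hF hp Fp.
have h1 := poly3_sqr_le1 hF hp Fp.
have h2 := poly3_sqr_le1 (poly3_swap12 h1) (poly3_swap12 hp) (fun x y z => Fp y x z).
have h3 := poly3_sqr_le1 (poly3_swap13 (poly3_swap12 h2)) (poly3_swap13 hp) (fun x y z => Fp z y x).
exact: poly3_swap13 h3.
Qed.

(** * The Calderon transformation *)

Section CalderonMap.
Variables N1 N2 N3 : nat.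
Local Notation Cal := (@calderon R N1 N2 N3).

Lemma calderon_weight_gt0 (x y z : R) :
  0 < (x ^+ 2 + 1) ^+ N1 * (y ^+ 2 + 1) ^+ N2 * (z ^+ 2 + 1) ^+ N3.
Proof.
have t_gt0 (t : R) : 0 < t ^+ 2 + 1 by rewrite ltr_wpDl ?sqr_ge0.
by rewrite !mulr_gt0 // exprn_gt0.
Qed.

Lemma calderonD (f g : fun3) : Cal (Defs.addf f g) = Defs.addf (Cal f) (Cal g).
Proof. by apply: funext3 => x y z; rewrite /calderon /Defs.addf; ring. Qed.

Lemma calderonZ (r : R) (f : fun3) : Cal (scalef r f) = scalef r (Cal f).
Proof. by apply: funext3 => x y z; rewrite /calderon /scalef; ring. Qed.

Lemma nonneg3_calderon (f : fun3) : nonneg3 f -> nonneg3 (Cal f).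
Proof. by move=> f_ge0 x y z; apply: mulr_ge0 => //; exact/ltW/calderon_weight_gt0. Qed.

Lemma nonneg3_of_calderon (f : fun3) : trig_poly N1 N2 N3 f -> nonneg3 (Cal f) -> nonneg3 f.
Proof.
move=> tf Cf_ge0; apply: (trig_poly_nonneg_box tf) => a b c ha hb hc.
case: (calpha_surj ha) (calpha_surj hb) (calpha_surj hc) => x <- [y <-] [z <-].
by have := Cf_ge0 x y z; rewrite /calderon pmulr_rge0 ?calderon_weight_gt0.
Qed.

Lemma calderon_inj (f g : fun3) : trig_poly N1 N2 N3 f -> trig_poly N1 N2 N3 g ->
  Cal f = Cal g -> f = g.
Proof.
move=> tf tg eCfg; pose h := Defs.addf f (scalef (-1) g).
have th : trig_poly N1 N2 N3 h by apply: trig_polyD => //; apply: trig_polyZ.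
have Ch0 x y z : Cal h x y z = 0.
  by rewrite calderonD calderonZ eCfg /Defs.addf /scalef; ring.
have h_ge0 : nonneg3 h by apply: nonneg3_of_calderon => // x y z; rewrite Ch0.
have h_le0 : nonneg3 (scalef (-1) h).
  apply: nonneg3_of_calderon; first exact: trig_polyZ.
  by move=> x y z; rewrite calderonZ /scalef Ch0 mulr0.
apply: funext3 => x y z; move: (h_ge0 x y z) (h_le0 x y z).
by rewrite /h /scalef /Defs.addf; lra.
Qed.

Lemma calderon_sigmaP (p : fun3) : sigmaP (2 * N1) (2 * N2) (2 * N3) p ->
  exists2 f, sigmaT N1 N2 N3 f & Cal f = p.
Proof.
move=> [[a ha] p_ge0]; pose f := half_poly (2 * N1) (2 * N2) (2 * N3) a.
have Cfp : Cal f = p.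
  by apply: funext3 => x y z; rewrite ha -half_poly_calpha !sqrt1D_expM.
exists f => //; split; first exact: trig_poly_half_poly.
by apply: nonneg3_of_calderon; [exact: trig_poly_half_poly | rewrite Cfp].
Qed.

Lemma calderon_sigma_image :
  Cal @` sigmaT N1 N2 N3 = sigmaP (2 * N1) (2 * N2) (2 * N3).
Proof.
apply/seteqP; split=> [_ [f [tf f_ge0] <-] | p /calderon_sigmaP[f sf <-]].
  by split; [exact: poly3_calderon | exact: nonneg3_calderon].
by exists f.
Qed.

Lemma calderon_sigma_extremal :
  maps_extremal_onto Cal (sigmaT N1 N2 N3) (sigmaP (2 * N1) (2 * N2) (2 * N3)).
Proof.
apply: (@linear_image_maps_extremal_onto _ (trig_poly N1 N2 N3)).
- exact: calderonD.
- exact: calderonZ.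
- exact: trig_polyD.
- exact: trig_polyZ.
- exact: calderon_inj.
- by move=> f [].
- exact: calderon_sigma_image.
Qed.

Lemma calderon_QT (f : fun3) : QT N1 N2 N3 f -> QP (2 * N1) (2 * N2) (2 * N3) (Cal f).
Proof.
move=> [[tf f_ge0] [r [F [tF hf]]]].
split; first by split; [exact: poly3_calderon | exact: nonneg3_calderon].
pose phi (x y z : R) : C := (sqrt1D x ^+ N1 * sqrt1D y ^+ N2 * sqrt1D z ^+ N3)%:C *
  expi (- (N1%:R * (calpha x / 2))) * expi (- (N2%:R * (calpha y / 2))) *
  expi (- (N3%:R * (calpha z / 2))).
pose G j x y z := phi x y z * F j (calpha x) (calpha y) (calpha z).
have sG j : spanned3 N1.+1 N2.+1 N3.+1 monomial3 (G j).
  have /atrig_polyE sF := tF j.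
  apply: (spanned3_comp sF) => k l m.
  apply: spanned3_ext (spanned3_prod (spanned1_cayley_mono (ltnSE (ltn_ord k)))
    (spanned1_cayley_mono (ltnSE (ltn_ord l))) (spanned1_cayley_mono (ltnSE (ltn_ord m)))).
  move=> x y z; rewrite -(expi_calpha_cayley x (ltnSE (ltn_ord k))).
  rewrite -(expi_calpha_cayley y (ltnSE (ltn_ord l))).
  by rewrite -(expi_calpha_cayley z (ltnSE (ltn_ord m))) /phi !rmorphM; ring.
have normG j x y z : `|G j x y z| ^+ 2 =
    ((x ^+ 2 + 1) ^+ N1 * (y ^+ 2 + 1) ^+ N2 * (z ^+ 2 + 1) ^+ N3)%:C *
    `|F j (calpha x) (calpha y) (calpha z)| ^+ 2.
  by rewrite /G /phi !normrM !norm_expi !mulr1 exprMn normsq_real !exprMn !sqrt1D_sqr.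
exists (r + r)%N, (fun j => match fintype.split j with
  | inl j => fun x y z => complex.Re (G j x y z)
  | inr j => fun x y z => complex.Im (G j x y z) end).
split=> [j | x y z].
  by case: (fintype.split j) => i; exists N1, N2, N3; [exact: poly3_Re | exact: poly3_Im].
rewrite big_split_ord /=.
under eq_bigr => j _ do rewrite (unsplitK (inl _ j)).
under [X in _ = _ + X]eq_bigr => j _ do rewrite (unsplitK (inr _ j)).
apply: (@complexI R); rewrite -big_split rmorph_sum /=.
under eq_bigr => j _ do rewrite add_Re2_Im2 normG.
by rewrite -mulr_sumr -hf /calderon !rmorphM.
Qed.

Lemma calderon_QP (p : fun3) : QP (2 * N1) (2 * N2) (2 * N3) p ->
  exists2 f, QT N1 N2 N3 f & Cal f = p.
Proof.
move=> [[pp p_ge0] [r [F [pF hp]]]].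
have dF j : poly3 N1 N2 N3 (F j).
  have [D1 [D2 [D3 hD]]] := pF j; apply: (poly3_sqr_le hD pp) => x y z.
  by rewrite hp (bigD1 j) //= lerDl sumr_ge0 // => i _; exact: sqr_ge0.
have [A hA] := @choice _ _ (fun j (a : nat -> nat -> nat -> R) => forall x y z,
  F j x y z = \sum_(k < N1.+1) \sum_(l < N2.+1) \sum_(m < N3.+1)
                a k l m * x ^+ k * y ^+ l * z ^+ m) dF.
pose f a b c := \sum_(j < r) half_poly N1 N2 N3 (A j) a b c ^+ 2.
pose F' j a b c := expi (N1%:R * (a / 2)) * expi (N2%:R * (b / 2)) * expi (N3%:R * (c / 2)) *
  (half_poly N1 N2 N3 (A j) a b c)%:C.
have hf a b c : (f a b c)%:C = \sum_(j < r) `|F' j a b c| ^+ 2.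
  by rewrite rmorph_sum; apply: eq_bigr => j _; rewrite !normrM !norm_expi !mul1r normsq_real.
exists f.
  split; last by exists r, F'; split=> // j; exact: atrig_half_poly.
  split=> [|a b c]; last by apply: sumr_ge0 => j _; exact: sqr_ge0.
  apply/trig_polyE; apply: spanned3_ext (spanned3_sum _) => [a b c | j]; first by rewrite hf.
  exact/spanned3_normsq_atrig/atrig_half_poly.
apply: funext3 => x y z; rewrite hp /calderon /f mulr_sumr; apply: eq_bigr => j _.
by rewrite hA -half_poly_calpha -!sqrt1D_sqr; ring.
Qed.

Lemma calderon_Q_image : Cal @` QT N1 N2 N3 = QP (2 * N1) (2 * N2) (2 * N3).
Proof.
apply/seteqP; split=> [_ [f Qf <-] | p /calderon_QP[f Qf <-]]; first exact: calderon_QT.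
by exists f.
Qed.

Lemma calderon_Q_extremal :
  maps_extremal_onto Cal (QT N1 N2 N3) (QP (2 * N1) (2 * N2) (2 * N3)).
Proof.
apply: (@linear_image_maps_extremal_onto _ (trig_poly N1 N2 N3)).
- exact: calderonD.
- exact: calderonZ.
- exact: trig_polyD.
- exact: trig_polyZ.
- exact: calderon_inj.
- by move=> f [[]].
- exact: calderon_Q_image.
Qed.

End CalderonMap.

End Calderon.

Theorem corollary8 (R : realType) (N1 N2 N3 : nat) :
  maps_extremal_onto (@calderon R N1 N2 N3)
    (@sigmaT R N1 N2 N3) (@sigmaP R (2 * N1) (2 * N2) (2 * N3)) /\
  maps_extremal_onto (@calderon R N1 N2 N3)
    (@QT R N1 N2 N3) (@QP R (2 * N1) (2 * N2) (2 * N3)).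
Proof. by split; [exact: calderon_sigma_extremal | exact: calderon_Q_extremal]. Qed.
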